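(* Let $K/k$ be a finite field extension and let $G$ be a finite group acting on $K(x_1,\ldots,x_n)$ by quasi-monomial $k$-automorphisms. Then there exists a normal subgroup $N$ of $G$ such that: (i) $K(x_1,\ldots,x_n)^N=K^N(y_1,\ldots,y_n)$, where $y_1,\ldots,y_n$ are algebraically independent over $K^N$ and each $y_i$ is of the form $a\,x_1^{e_1}x_2^{e_2}\cdots x_n^{e_n}$ with $a\in K^\times$ and $e_1,\ldots,e_n\in\mathbb{Z}$ (and one may take $a=1$ if the action of $G$ is purely quasi-monomial); (ii) $G/N$ acts on $K^N(y_1,\ldots,y_n)$ by quasi-monomial $k$-automorphisms; (iii) the homomorphism $\rho_{\underline{y}}\colon G/N\to GL_n(\mathbb{Z})$ associated to this action (with respect to $y_1,\ldots,y_n$) is injective.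
   Context: Let $K/k$ be a finite field extension and $K(x_1,\ldots,x_n)$ the rational function field over $K$. A finite subgroup $G\subset \mathrm{Aut}_k(K(x_1,\ldots,x_n))$ acts by quasi-monomial $k$-automorphisms if (i) $\sigma(K)\subset K$ for all $\sigma\in G$; (ii) $K^G=k$; (iii) for every $\sigma\in G$ and $1\le j\le n$, $\sigma(x_j)=c_j(\sigma)\prod_{i=1}^n x_i^{a_{ij}}$ with $c_j(\sigma)\in K^\times$ and $[a_{ij}]_{1\le i,j\le n}\in GL_n(\mathbb{Z})$. The action is purely quasi-monomial if moreover all $c_j(\sigma)=1$. The associated homomorphism $\rho_{\underline{x}}\colon G\to GL_n(\mathbb{Z})$ is $\rho_{\underline{x}}(\sigma)=[a_{ij}]$ where the $a_{ij}$ are as in (iii). *)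

From HB Require Import structures.
From mathcomp Require Import all_boot all_order all_algebra all_fingroup.
Set Implicit Arguments. Unset Strict Implicit. Unset Printing Implicit Defensive.
Import GRing.Theory Num.Theory.
Local Open Scope ring_scope.

Section QMDefs.
Variable L : fieldType.

Definition is_subfield (P : pred L) : Prop :=
  [/\ 1 \in P, {in P &, forall a b, a - b \in P},
      {in P &, forall a b, a * b \in P} & {in P, forall a, a^-1 \in P}].

Definition sub_pred (P Q : pred L) : Prop := forall a, a \in P -> a \in Q.

Definition gen_field (F : pred L) n (y : 'I_n -> L) (E : pred L) : Prop :=
  [/\ is_subfield E, sub_pred F E, (forall i, y i \in E) &
      forall P : pred L, is_subfield P -> sub_pred F P ->
        (forall i, y i \in P) -> sub_pred E P].

Definition alg_indep (F : pred L) n (y : 'I_n -> L) : Prop :=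
  forall (s : seq {ffun 'I_n -> nat}) (c : {ffun 'I_n -> nat} -> L),
    uniq s -> (forall e, e \in s -> c e \in F) ->
    \sum_(e <- s) c e * \prod_(i < n) y i ^+ e i = 0 ->
    forall e, e \in s -> c e = 0.

Definition finite_ext (k K : pred L) : Prop :=
  sub_pred k K /\
  exists b : seq L, (forall v, v \in b -> v \in K) /\
    forall a, a \in K -> exists lam : 'I_(size b) -> L,
      (forall i, lam i \in k) /\ a = \sum_(i < size b) lam i * b`_i.

Variable gT : finGroupType.

Definition fixed_field (H : {set gT}) (act : gT -> L -> L) : pred L :=
  [pred a | [forall g in H, act g a == a]].

Definition kaut_action (k : pred L) (G : {group gT}) (act : gT -> L -> L) : Prop :=
  [/\ forall g, g \in G -> [/\ forall a b, act g (a + b) = act g a + act g b,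
                              forall a b, act g (a * b) = act g a * act g b &
                              act g 1 = 1],
      forall g h a, g \in G -> h \in G -> act (g * h)%g a = act g (act h a),
      forall a, act 1%g a = a,
      forall g, g \in G -> (forall a, act g a = a) -> g = 1%g &
      forall g a, g \in G -> a \in k -> act g a = a].

Definition rho_rel (F : pred L) n (y : 'I_n -> L) (act : gT -> L -> L)
    (g : gT) (A : 'M[int]_n) : Prop :=
  forall j, exists2 c, (c \in F) && (c != 0) &
    act g (y j) = c * \prod_(i < n) y i ^ A i j.

Definition rho_rel1 n (y : 'I_n -> L) (act : gT -> L -> L)
    (g : gT) (A : 'M[int]_n) : Prop :=
  forall j, act g (y j) = \prod_(i < n) y i ^ A i j.

(* The group G, acting through act, with kernel H on E, acts on E = F(y) by
   quasi-monomial k-automorphisms (i.e. G/H embedded in Aut_k(E)). *)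
Definition qm_action (k F E : pred L) (G H : {set gT}) (act : gT -> L -> L)
    n (y : 'I_n -> L) : Prop :=
  [/\ forall g, g \in G -> forall a, a \in E -> act g a \in E,
      forall g, g \in G -> (forall a, a \in E -> act g a = a) -> g \in H,
      forall g, g \in G -> forall a, a \in F -> act g a \in F,
      forall a, a \in F -> (a \in k <-> forall g, g \in G -> act g a = a) &
      forall g, g \in G -> exists2 A : 'M[int]_n, A \in unitmx & rho_rel F y act g A].

Definition pqm_action (k F E : pred L) (G H : {set gT}) (act : gT -> L -> L)
    n (y : 'I_n -> L) : Prop :=
  qm_action k F E G H act y /\
  forall g, g \in G -> exists2 A : 'M[int]_n, A \in unitmx & rho_rel1 y act g A.

End QMDefs.

From HB Require Import structures.
From mathcomp Require Import all_boot all_order all_algebra all_fingroup.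
From mathcomp Require Import boolp zify ring.
Import Order.TTheory GRing.Theory Num.Theory.
Set Implicit Arguments. Unset Strict Implicit. Unset Printing Implicit Defensive.
Local Open Scope ring_scope.

(* Let N be the subgroup of G acting diagonally on the x_j, i.e. multiplying
   each x_j by a scalar of K; it is normal since a conjugate of a diagonal
   element by a quasi-monomial one is again diagonal. The exponents w for which
   some c x^w (c in K^x) is N-invariant form a lattice containing |N| Z^n (the
   norm of x_j is a multiple of x_j^|N|); an echelon basis b_1, ..., b_n of it
   gives invariant y_i = a_i x^b_i. An N-invariant element is a quotient of
   Laurent polynomials with invariant denominator (multiply by the conjugates of
   the denominator), and as N rescales every monomial while distinct monomials
   are linearly independent, invariant Laurent polynomials are combinations of
   invariant monomials, i.e. of monomials in the y_i over K^N. Finally, if g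
   rescales every y_i, its rho-matrix A satisfies A B = B, so A = 1 and g lies
   in N: the induced representation of G/N is faithful. *)

Section Subfield.
Variables (L : fieldType) (P : pred L).
Hypothesis subP : is_subfield P.

Lemma subfield1 : 1 \in P. Proof. by case: subP. Qed.

Lemma subfieldB a b : a \in P -> b \in P -> a - b \in P.
Proof. by case: subP => _ h _ _; apply: h. Qed.

Lemma subfieldM a b : a \in P -> b \in P -> a * b \in P.
Proof. by case: subP => _ _ h _; apply: h. Qed.

Lemma subfieldV a : a \in P -> a^-1 \in P.
Proof. by case: subP => _ _ _ h; apply: h. Qed.

Lemma subfield0 : 0 \in P.
Proof. by rewrite -(subrr 1) subfieldB ?subfield1. Qed.

Lemma subfieldN a : a \in P -> - a \in P.
Proof. by move=> Pa; rewrite -sub0r subfieldB ?subfield0. Qed.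

Lemma subfieldD a b : a \in P -> b \in P -> a + b \in P.
Proof. by move=> Pa Pb; rewrite -(opprK b) subfieldB ?subfieldN. Qed.

Lemma subfield_div a b : a \in P -> b \in P -> a / b \in P.
Proof. by move=> Pa Pb; rewrite subfieldM ?subfieldV. Qed.

Lemma subfieldX a m : a \in P -> a ^+ m \in P.
Proof. by move=> Pa; elim: m => [|m IHm]; rewrite ?expr0 ?subfield1 // exprS subfieldM. Qed.

Lemma subfieldXz a (z : int) : a \in P -> a ^ z \in P.
Proof. by move=> Pa; case: z => m; [apply: subfieldX | apply/subfieldV/subfieldX]. Qed.

Lemma subfield_sum (I : Type) (r : seq I) (Q : pred I) (F : I -> L) :
  (forall i, Q i -> F i \in P) -> \sum_(i <- r | Q i) F i \in P.
Proof.
by move=> PF; apply: (big_ind (fun v => v \in P)) => //; [apply: subfield0 | apply: subfieldD].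
Qed.

Lemma subfield_prod (I : Type) (r : seq I) (Q : pred I) (F : I -> L) :
  (forall i, Q i -> F i \in P) -> \prod_(i <- r | Q i) F i \in P.
Proof.
by move=> PF; apply: (big_ind (fun v => v \in P)) => //; [apply: subfield1 | apply: subfieldM].
Qed.

End Subfield.

Lemma prodfXz (F : fieldType) (I : Type) (r : seq I) (f : I -> F) (z : int) :
  (\prod_(i <- r) f i) ^ z = \prod_(i <- r) f i ^ z.
Proof. exact: (big_morph (fun a => a ^ z) (fun a b => expfzMl a b z) (exp1rz F z)). Qed.

Section NonsingularMatrix.
Variables (R : idomainType) (n : nat) (B : 'M[R]_n).
Hypothesis detB : \det B != 0.

Lemma mulmx_detl_inj m (u v : 'M_(n, m)) : B *m u = B *m v -> u = v.
Proof.
move=> Buv; have : \adj B *m (B *m u) = \adj B *m (B *m v) by rewrite Buv.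
rewrite !mulmxA mul_adj_mx !mul_scalar_mx => /matrixP Euv.
by apply/matrixP => i j; have := Euv i j; rewrite !mxE => /(mulfI detB).
Qed.

Lemma mulmx_fixl_eq1 (A : 'M[R]_n) : A *m B = B -> A = 1%:M.
Proof.
move=> AB; have : A *m B *m \adj B = B *m \adj B by rewrite AB.
rewrite -mulmxA mul_mx_adj mul_mx_scalar -scalemx1 => /matrixP EA.
by apply/matrixP => i j; have := EA i j; rewrite !mxE -mulr_natr mul1r => /(mulfI detB).
Qed.

Lemma det_intertwined (A C : 'M[R]_n) : B *m C = A *m B -> \det C = \det A.
Proof.
move=> /(congr1 determinant); rewrite !det_mulmx [RHS]mulrC.
exact: mulfI.
Qed.

End NonsingularMatrix.

Section LatticeBasis.
Variables (n : nat) (M : 'cV[int]_n -> Prop).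
Hypotheses (M_sub : forall u v, M u -> M v -> M (u - v))
           (M_scale : forall (z : int) u, M u -> M (z *: u)).
Variable d : nat.
Hypotheses (d_gt0 : (0 < d)%N) (M_full : forall j, M (d%:Z *: delta_mx j 0)).

Definition vanishes_before (j : nat) (v : 'cV[int]_n) := forall i : 'I_n, (i < j)%N -> v i 0 = 0.

Lemma lattice_pivot (j : 'I_n) : exists b : 'cV[int]_n,
  [/\ M b, vanishes_before j b, 0 < b j 0 &
     forall v, M v -> vanishes_before j v -> 0 < v j 0 -> b j 0 <= v j 0].
Proof.
pose pivot m := `[< (0 < m)%N /\
  exists v, [/\ M v, vanishes_before j v & v j 0 = m%:Z] >].
have ex_pivot : exists m, pivot m.
  exists d; apply/asboolP; split => //; exists (d%:Z *: delta_mx j 0).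
  split; first exact: M_full.
    move=> i lt_ij; rewrite !mxE (_ : i == j = false) ?mulr0 //.
    by apply: contra_ltnF lt_ij => /eqP ->.
  by rewrite !mxE !eqxx mulr1.
case: (ex_minnP ex_pivot) => m /asboolP [m_gt0 [b [Mb b_van bj]]] min_m.
exists b; split => //; first by rewrite bj; lia.
move=> v Mv v_van v_pos; rewrite bj.
have /min_m : pivot (absz (v j 0)) by apply/asboolP; split; [lia | exists v; split => //; lia].
by lia.
Qed.

Lemma lattice_reduce (j : 'I_n) b v :
    M b -> vanishes_before j b -> 0 < b j 0 ->
    (forall u, M u -> vanishes_before j u -> 0 < u j 0 -> b j 0 <= u j 0) ->
    M v -> vanishes_before j v ->
  M (v - divz (v j 0) (b j 0) *: b) /\ vanishes_before j.+1 (v - divz (v j 0) (b j 0) *: b).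
Proof.
move=> Mb b_van b_pos b_min Mv v_van; set v' := v - _ *: b.
have Mv' : M v' by apply/M_sub/M_scale.
have v'_van : vanishes_before j v'.
  by move=> i lt_ij; rewrite /v' !mxE (v_van i lt_ij) (b_van i lt_ij) mulr0 subrr.
split=> // i; rewrite ltnS leq_eqVlt => /orP [/eqP ij|]; last exact: v'_van.
have -> : i = j by apply: val_inj.
have v'j : v' j 0 = modz (v j 0) (b j 0).
  by rewrite /v' !mxE {1}(divz_eq (v j 0) (b j 0)) addrAC subrr add0r.
have v'_ge0 : 0 <= v' j 0 by rewrite v'j modz_ge0 ?gt_eqF.
have [v'_pos|] := boolP (0 < v' j 0); last by rewrite lt_def v'_ge0 andbT negbK => /eqP.
by have := b_min v' Mv' v'_van v'_pos; rewrite leNgt v'j ltz_pmod.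
Qed.

(* The pivots b_j span M: reduce coordinate after coordinate by division with
   remainder. *)
Lemma lattice_basis : exists B : 'M[int]_n,
  [/\ \det B != 0, forall j, M (col j B) & forall v, M v -> exists w, v = B *m w].
Proof.
have [b b_pivot] := fin_all_exists lattice_pivot.
pose B : 'M[int]_n := \matrix_(i, j) b j i 0.
have colB j : col j B = b j by apply/matrixP => i l; rewrite (ord1 l) !mxE.
exists B; split.
- rewrite det_trig; last first.
    by apply/is_trig_mxP => i j lt_ij; rewrite mxE; case: (b_pivot j) => _ van _ _; apply: van.
  by rewrite prodf_seq_neq0; apply/allP => j _; rewrite mxE; have [_ _ /gt_eqF -> _] := b_pivot j.
- by move=> j; rewrite colB; case: (b_pivot j).
suff span r : (r <= n)%N -> forall v, M v -> vanishes_before (n - r) v -> exists w, v = B *m w.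
  by move=> v Mv; apply: (span n) => // i; rewrite subnn.
elim: r => [|r IHr] le_rn v Mv v_van.
  by exists 0; rewrite mulmx0; apply/matrixP => i l; rewrite (ord1 l) mxE v_van ?subn0.
have lt_jn : (n - r.+1 < n)%N by lia.
pose j := Ordinal lt_jn; have [Mbj bj_van bj_pos bj_min] := b_pivot j.
have [Mv' v'_van] := lattice_reduce Mbj bj_van bj_pos bj_min Mv v_van.
have [w v'E] : exists w, v - divz (v j 0) (b j j 0) *: b j = B *m w.
  by apply: IHr; rewrite 1?ltnW // (_ : (n - r)%N = j.+1) //= subnSK.
exists (w + divz (v j 0) (b j j 0) *: delta_mx j 0).
by rewrite mulmxDr -scalemxAr -colE colB -v'E subrK.
Qed.

End LatticeBasis.

Lemma sum_regroup (R : pzRingType) (T : eqType) (f : T -> R) (r : seq (T * R)) (t : seq T) :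
  uniq t -> {subset map fst r <= t} ->
  \sum_(q <- r) q.2 * f q.1 = \sum_(w <- t) (\sum_(q <- r | q.1 == w) q.2) * f w.
Proof.
move=> t_uniq; elim: r => [|q r IHr] sub_rt.
  by rewrite big_nil big1 // => w _; rewrite big_nil mul0r.
have tq : q.1 \in t by rewrite sub_rt ?mem_head.
rewrite big_cons IHr; last by move=> w rw; rewrite sub_rt // inE rw orbT.
rewrite (big_rem _ tq) [RHS](big_rem _ tq) /= big_cons eqxx mulrDl -addrA; congr (_ + _).
congr (_ + _); rewrite !big_seq; apply: eq_bigr => w.
rewrite mem_rem_uniq // inE => /andP [wq _].
by rewrite big_cons eq_sym (negPf wq).
Qed.

Section LaurentMonomials.
Variables (L : fieldType) (K : pred L) (n : nat) (x : 'I_n -> L).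
Hypotheses (subK : is_subfield K) (indep_x : alg_indep K x).

Lemma alg_indep_neq0 i : x i != 0.
Proof.
apply/eqP => xi0; pose e : {ffun 'I_n -> nat} := [ffun j => (j == i) : nat].
suff /eqP : (1 : L) = 0 by rewrite oner_eq0.
apply: (indep_x (c := fun=> 1) _ _ _ (mem_head e [::])) => // [_ _|].
  exact: subfield1.
rewrite big_seq1 mul1r (bigD1 i) //= big1 ?mulr1; first by rewrite ffunE eqxx xi0 expr1.
by move=> j /negPf ji; rewrite ffunE ji expr0.
Qed.

Definition xmon (v : 'cV[int]_n) : L := \prod_(i < n) x i ^ v i 0.

Lemma xmon_neq0 v : xmon v != 0.
Proof. by rewrite prodf_seq_neq0; apply/allP => i _; rewrite expfz_neq0 ?alg_indep_neq0. Qed.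

Lemma xmon0 : xmon 0 = 1.
Proof. by rewrite /xmon big1 // => i _; rewrite mxE expr0z. Qed.

Lemma xmonD u v : xmon (u + v) = xmon u * xmon v.
Proof.
by rewrite /xmon -big_split; apply: eq_bigr => i _; rewrite mxE expfzDr ?alg_indep_neq0.
Qed.

Lemma xmonN u : xmon (- u) = (xmon u)^-1.
Proof. by apply: (mulfI (xmon_neq0 u)); rewrite -xmonD subrr xmon0 divff ?xmon_neq0. Qed.

Lemma xmonB u v : xmon (u - v) = xmon u / xmon v.
Proof. by rewrite xmonD xmonN. Qed.

Lemma xmonZ (z : int) u : xmon (z *: u) = xmon u ^ z.
Proof. by rewrite /xmon prodfXz; apply: eq_bigr => i _; rewrite mxE exprz_exp mulrC. Qed.

Lemma xmon_delta j : xmon (delta_mx j 0) = x j.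
Proof.
rewrite /xmon (bigD1 j) //= big1 ?mulr1; first by rewrite mxE !eqxx expr1z.
by move=> i /negPf ij; rewrite mxE ij expr0z.
Qed.

Lemma xmon_col (A : 'M[int]_n) j : xmon (col j A) = \prod_(i < n) x i ^ A i j.
Proof. by apply: eq_bigr => i _; rewrite mxE. Qed.

Lemma xmon_mulmx (A : 'M[int]_n) v : xmon (A *m v) = \prod_(j < n) xmon (col j A) ^ v j 0.
Proof.
transitivity (\prod_(i < n) \prod_(j < n) x i ^ (A i j * v j 0)).
  apply: eq_bigr => i _; rewrite mxE.
  exact: (big_morph _ (fun a b => expfzDr a b (alg_indep_neq0 i)) (expr0z _)).
rewrite exchange_big; apply: eq_bigr => j _; rewrite prodfXz.
by apply: eq_bigr => i _; rewrite mxE exprz_exp.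
Qed.

(* Multiplying by (x_1 ... x_n)^D, with D bounding all exponents, turns the
   Laurent monomials into distinct ordinary monomials. *)
Lemma xmon_free (I : eqType) (r : seq I) (phi : I -> 'cV[int]_n) (c : I -> L) :
  uniq r -> {in r &, injective phi} -> (forall e, e \in r -> c e \in K) ->
  \sum_(e <- r) c e * xmon (phi e) = 0 -> forall e, e \in r -> c e = 0.
Proof.
move=> r_uniq phi_inj Kc sum0 e re.
pose a e' i := absz (phi e' i 0).
pose D := (\sum_(e' <- r) \sum_(i < n) a e' i)%N.
have le_D e' i : e' \in r -> (a e' i <= D)%N.
  move=> re'; rewrite /D (big_rem e' re') /= (bigD1 i) //=.
  by rewrite -addnA leq_addr.
pose psi e' : {ffun 'I_n -> nat} := [ffun i => absz (phi e' i 0 + D%:Z)].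
have psiE e' i : e' \in r -> (psi e' i)%:Z = phi e' i 0 + D%:Z.
  by move=> re'; rewrite ffunE; have := le_D e' i re'; rewrite /a; lia.
have psi_inj : {in r &, injective psi}.
  move=> e1 e2 r1 r2 psi12; apply: phi_inj => //; apply/matrixP => i l.
  by rewrite (ord1 l); apply: (addIr D%:Z); rewrite -!psiE // psi12.
have psi_mon e' : e' \in r ->
    \prod_(i < n) x i ^+ psi e' i = xmon (phi e') * \prod_(i < n) x i ^+ D.
  move=> re'; rewrite /xmon -big_split /=; apply: eq_bigr => i _.
  by rewrite -[x i ^+ _]/(x i ^ (psi e' i)%:Z) psiE // expfzDr ?alg_indep_neq0.
pose c' f := c (nth e r (index f (map psi r))).
have c'E e' : e' \in r -> c' (psi e') = c e'.
  by move=> re'; rewrite /c' nth_index_map.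
rewrite -c'E //; apply: (indep_x (s := map psi r)); last exact: map_f.
- by rewrite map_inj_in_uniq.
- by move=> f /mapP [e' re' ->]; rewrite c'E ?Kc.
rewrite big_map (eq_big_seq (fun e' => c e' * xmon (phi e') * \prod_(i < n) x i ^+ D)).
  by rewrite -mulr_suml sum0 mul0r.
by move=> e' re'; rewrite c'E // psi_mon // mulrA.
Qed.

Lemma xmon_inj p q u v : p \in K -> q \in K -> p != 0 ->
  p * xmon u = q * xmon v -> u = v /\ p = q.
Proof.
move=> Kp Kq p0 puqv; have [uv|uv] := eqVneq u v.
  by move: puqv; rewrite uv => /(mulIf (xmon_neq0 v)).
pose c w := if w == u then p else - q.
have: c u = 0.
  apply: (@xmon_free _ [:: u; v] id) => //; rewrite ?mem_head //.
  - by rewrite /= inE uv.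
  - by move=> w _; rewrite /c; case: ifP => _; rewrite ?subfieldN.
  by rewrite big_cons big_seq1 /c eqxx eq_sym (negPf uv) puqv mulNr subrr.
by rewrite /c eqxx => /eqP; rewrite (negPf p0).
Qed.

Definition laurent (v : L) := exists r : seq ('cV[int]_n * L),
  (forall q, q \in r -> q.2 \in K) /\ v = \sum_(q <- r) q.2 * xmon q.1.

Lemma laurent_mon c w : c \in K -> laurent (c * xmon w).
Proof. by exists [:: (w, c)]; rewrite big_seq1; split => // q /[!inE] /eqP ->. Qed.

Lemma laurent0 : laurent 0.
Proof. by exists [::]; rewrite big_nil. Qed.

Lemma laurentK c : c \in K -> laurent c.
Proof. by move=> Kc; rewrite -[c]mulr1 -xmon0; apply: laurent_mon. Qed.

Lemma laurentD u v : laurent u -> laurent v -> laurent (u + v).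
Proof.
move=> [r1 [K1 ->]] [r2 [K2 ->]]; exists (r1 ++ r2); rewrite big_cat.
by split => // q; rewrite mem_cat => /orP [] ?; [apply: K1 | apply: K2].
Qed.

Lemma laurent_monM c w v : c \in K -> laurent v -> laurent (c * xmon w * v).
Proof.
move=> Kc [r [Kr ->]]; exists (map (fun q => (q.1 + w, c * q.2)) r).
rewrite big_map mulr_sumr; split; last by apply: eq_bigr => q _ /=; rewrite xmonD; ring.
by move=> q /mapP [q' r_q' ->]; rewrite subfieldM ?Kr.
Qed.

Lemma laurentB u v : laurent u -> laurent v -> laurent (u - v).
Proof.
move=> lu lv; apply: laurentD => //.
have -> : - v = -1 * xmon 0 * v by rewrite xmon0 mulr1 mulN1r.
by apply: laurent_monM; rewrite ?subfieldN ?subfield1.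
Qed.

Lemma laurentM u v : laurent u -> laurent v -> laurent (u * v).
Proof.
move=> [r [Kr ->]] lv; elim: r Kr => [|q r IHr] Kr.
  by rewrite big_nil mul0r; apply: laurent0.
rewrite big_cons mulrDl; apply: laurentD.
  by apply: laurent_monM; rewrite ?Kr ?mem_head.
by apply: IHr => q' rq'; rewrite Kr // inE rq' orbT.
Qed.

Lemma laurent_prod (I : Type) (r : seq I) (P : pred I) (F : I -> L) :
  (forall i, P i -> laurent (F i)) -> laurent (\prod_(i <- r | P i) F i).
Proof. by move=> lF; apply: big_ind => //; [apply/laurentK/subfield1 | apply: laurentM]. Qed.

Lemma laurent_uniq v : laurent v -> exists t (C : 'cV[int]_n -> L),
  [/\ uniq t, forall w, C w \in K & v = \sum_(w <- t) C w * xmon w].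
Proof.
move=> [r [Kr ->]]; exists (undup (map fst r)), (fun w => \sum_(q <- r | q.1 == w) q.2).
split; first exact: undup_uniq.
  by move=> w; rewrite big_seq_cond; apply: subfield_sum => // q /andP [/Kr].
by apply: sum_regroup; [exact: undup_uniq | move=> w; rewrite mem_undup].
Qed.

Hypothesis gen_x : gen_field K x predT.

Lemma laurent_fraction a : exists p q, [/\ laurent p, laurent q, q != 0 & a = p / q].
Proof.
pose S := [pred b | `[< exists p q, [/\ laurent p, laurent q, q != 0 & b = p / q] >]].
have laurent1 : laurent 1 by apply/laurentK/subfield1.
have S_laurent p : laurent p -> p \in S.
  by move=> lp; apply/asboolP; exists p, 1; rewrite divr1 oner_neq0.
have subS : is_subfield S.
  split.
  - exact: S_laurent.
  - move=> _ _ /asboolP [p1 [q1 [l1 l1' q10 ->]]] /asboolP [p2 [q2 [l2 l2' q20 ->]]].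
    apply/asboolP; exists (p1 * q2 - p2 * q1), (q1 * q2).
    split; [by apply: laurentB; apply: laurentM | exact: laurentM | by rewrite mulf_neq0 |].
    by field; rewrite q10 q20.
  - move=> _ _ /asboolP [p1 [q1 [l1 l1' q10 ->]]] /asboolP [p2 [q2 [l2 l2' q20 ->]]].
    apply/asboolP; exists (p1 * p2), (q1 * q2).
    split; [exact: laurentM | exact: laurentM | by rewrite mulf_neq0 |].
    by field; rewrite q10 q20.
  - move=> _ /asboolP [p [q [lp lq q0 ->]]]; rewrite invf_div.
    have [->|p0] := eqVneq p 0; first by rewrite invr0 mulr0; apply/S_laurent/laurent0.
    by apply/asboolP; exists q, p.
suff /asboolP : a \in S by [].
have [_ _ _ minS] := gen_x; apply: (minS S subS) => // [b Kb | i].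
  exact/S_laurent/laurentK.
by rewrite -xmon_delta -[xmon _]mul1r; apply/S_laurent/laurent_mon/subfield1.
Qed.


Section DiagonalSubgroup.
Variables (k : pred L) (gT : finGroupType) (G : {group gT}) (act : gT -> L -> L).
Hypotheses (kaut : kaut_action k G act) (qm_x : qm_action k K predT G [set 1%g] act x).

Lemma act_rmorph g : g \in G -> exists f : {rmorphism L -> L}, act g = f.
Proof.
case: kaut => hom _ _ _ _ Gg; have [actD actM act1] := hom g Gg.
have actB a b : act g (a - b) = act g a - act g b.
  by apply: (addIr (act g b)); rewrite -actD !subrK.
pose f : {rmorphism L -> L} := HB.pack (act g)
  (GRing.isZmodMorphism.Build L L (act g) actB)
  (GRing.isMonoidMorphism.Build L L (act g) (conj act1 actM)).
by exists f.
Qed.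

Lemma actM g h a : g \in G -> h \in G -> act (g * h)%g a = act g (act h a).
Proof. by case: kaut => _ actM _ _ _; apply: actM. Qed.

Lemma act1 a : act 1%g a = a.
Proof. by case: kaut. Qed.

Lemma actK g a : g \in G -> act g^-1%g (act g a) = a.
Proof. by move=> Gg; rewrite -actM ?groupV // mulVg act1. Qed.

Lemma act_eq0 g a : g \in G -> (act g a == 0) = (a == 0).
Proof.
move=> Gg; apply/eqP/eqP => [ga0|->]; last by have [f ->] := act_rmorph Gg; rewrite rmorph0.
by rewrite -(actK a Gg) ga0; have [f ->] := act_rmorph (groupVr Gg); rewrite rmorph0.
Qed.

Lemma act_in g a : g \in G -> a \in K -> act g a \in K.
Proof. by case: qm_x => _ _ K_stable _ _ Gg Ka; apply: K_stable. Qed.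

Lemma act_rho g : g \in G -> exists2 A : 'M[int]_n, A \in unitmx & rho_rel K x act g A.
Proof. by case: qm_x => _ _ _ _; apply. Qed.

Lemma act_xmon g (A : 'M[int]_n) v : g \in G -> rho_rel K x act g A ->
  exists2 c, (c \in K) && (c != 0) & act g (xmon v) = c * xmon (A *m v).
Proof.
move=> Gg /fin_all_exists2 [c cK actx].
exists (\prod_(j < n) c j ^ v j 0).
  rewrite subfield_prod => [|//|j _]; last by rewrite subfieldXz //; case/andP: (cK j).
  by rewrite prodf_seq_neq0; apply/allP => j _; rewrite expfz_neq0 //; case/andP: (cK j).
have [f actE] := act_rmorph Gg; rewrite xmon_mulmx [in LHS]/xmon actE rmorph_prod -big_split /=.
by apply: eq_bigr => j _; rewrite fmorphXz -actE actx expfzMl xmon_col.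
Qed.

Lemma laurent_act g v : g \in G -> laurent v -> laurent (act g v).
Proof.
move=> Gg [r [Kr ->]]; have [A _ rhoA] := act_rho Gg; have [f actE] := act_rmorph Gg.
rewrite actE rmorph_sum big_seq; apply: (big_ind laurent); [exact: laurent0 | exact: laurentD |].
move=> q rq; rewrite rmorphM -actE; have [c /andP [Kc _] ->] := act_xmon q.1 Gg rhoA.
by rewrite mulrA; apply/laurent_mon/subfieldM; rewrite // act_in ?Kr.
Qed.

Definition diagonal g := [forall j, act g (x j) / x j \in K].

Lemma diagonalP g :
  reflect (forall j, exists2 c, c \in K & act g (x j) = c * x j) (diagonal g).
Proof.
apply: (iffP forallP) => [Kx j | xc j]; last first.
  by have [c Kc ->] := xc j; rewrite mulfK ?alg_indep_neq0.
by exists (act g (x j) / x j); rewrite ?Kx ?divfK ?alg_indep_neq0.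
Qed.

Definition Gdiag := [set g in G | diagonal g].

Lemma Gdiag_sub g : g \in Gdiag -> g \in G.
Proof. by rewrite inE => /andP []. Qed.

Lemma Gdiag_xmon g w : g \in Gdiag ->
  exists2 c, (c \in K) && (c != 0) & act g (xmon w) = c * xmon w.
Proof.
rewrite inE => /andP [Gg /diagonalP xc].
have rho1 : rho_rel K x act g 1%:M.
  move=> j; have [c Kc actx] := xc j; exists c; last by rewrite -xmon_col col1 xmon_delta.
  rewrite Kc /=; have : act g (x j) != 0 by rewrite act_eq0 ?alg_indep_neq0.
  by rewrite actx mulf_eq0 negb_or => /andP [].
by have [c ? ->] := act_xmon w Gg rho1; rewrite mul1mx; exists c.
Qed.

Fact Gdiag_group_set : group_set Gdiag.
Proof.
apply/group_setP; split.
  by rewrite inE group1; apply/diagonalP => j; exists 1; rewrite ?mul1r ?act1 ?subfield1.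
move=> g h /[!inE] /andP [Gg /diagonalP xg] /andP [Gh /diagonalP xh].
rewrite groupM //=; apply/diagonalP => j; have [c Kc xhj] := xh j; have [c' Kc' xgj] := xg j.
exists (act g c * c'); first by rewrite subfieldM ?act_in.
by rewrite actM // xhj; have [f actE] := act_rmorph Gg; rewrite actE rmorphM -actE xgj mulrA.
Qed.

Canonical Gdiag_group := Group Gdiag_group_set.

(* g^-1 h g (x_j) = g^-1 (h (c x^A_j)), and h rescales the monomial x^A_j. *)
Lemma Gdiag_conj g h : g \in G -> h \in Gdiag -> (h ^ g)%g \in Gdiag.
Proof.
move=> Gg Nh; have Gh := Gdiag_sub Nh; rewrite inE groupJ //=; apply/diagonalP => j.
have [A _ rhoA] := act_rho Gg; have [c /andP [Kc c0] actx] := rhoA j.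
have [chi /andP [Kchi _] actxm] := Gdiag_xmon (col j A) Nh.
exists (act g^-1%g (act h c * chi / c)).
  by rewrite act_in ?groupV // subfield_div ?subfieldM ?act_in.
rewrite /conjg !actM ?groupM ?groupV // actx -xmon_col.
have [f actE] := act_rmorph Gh; rewrite actE rmorphM -actE actxm.
have -> : act h c * (chi * xmon (col j A)) = (act h c * chi / c) * (c * xmon (col j A)).
  by field.
rewrite xmon_col -actx; have [f' actE'] := act_rmorph (groupVr Gg).
by rewrite actE' rmorphM -actE' actK.
Qed.

Lemma Gdiag_normal : (Gdiag <| G)%g.
Proof.
apply/normalP; split; first by apply/subsetP => g; apply: Gdiag_sub.
move=> g Gg; apply/eqP; rewrite eqEcard cardJg leqnn andbT; apply/subsetP => h.
by rewrite mem_conjg => /(Gdiag_conj Gg); rewrite conjgKV.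
Qed.

Local Notation LN := (fixed_field Gdiag act).

Lemma fixedP a : reflect (forall g, g \in Gdiag -> act g a = a) (a \in LN).
Proof. by apply: (iffP forall_inP) => fix_a g /fix_a => [/eqP|->]. Qed.

Lemma fixed_subfield : is_subfield LN.
Proof.
split.
- by apply/fixedP => g /Gdiag_sub /act_rmorph [f ->]; rewrite rmorph1.
- move=> a b /fixedP fa /fixedP fb; apply/fixedP => g Ng.
  by have [f actE] := act_rmorph (Gdiag_sub Ng); rewrite actE rmorphB -actE fa ?fb.
- move=> a b /fixedP fa /fixedP fb; apply/fixedP => g Ng.
  by have [f actE] := act_rmorph (Gdiag_sub Ng); rewrite actE rmorphM -actE fa ?fb.
- move=> a /fixedP fa; apply/fixedP => g Ng.
  by have [f actE] := act_rmorph (Gdiag_sub Ng); rewrite actE fmorphV -actE fa.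
Qed.

Lemma act_fixed g b : g \in G -> b \in LN -> act g b \in LN.
Proof.
move=> Gg /fixedP fb; apply/fixedP => h Nh; have Gh := Gdiag_sub Nh.
by rewrite -actM // conjgC actM ?groupJ // fb // Gdiag_conj.
Qed.

Lemma prod_orbit_fixed w : \prod_(g in Gdiag) act g w \in LN.
Proof.
apply/fixedP => h Nh; have [f actE] := act_rmorph (Gdiag_sub Nh); rewrite actE rmorph_prod -actE.
rewrite [RHS](reindex_inj (mulgI h)) /=; apply: eq_big => g; first by rewrite groupMl.
by move=> Ng; rewrite actM ?Gdiag_sub.
Qed.

(* Gdiag rescales each Laurent monomial, so by linear independence of
   monomials each term of an invariant Laurent polynomial is invariant. *)
Lemma laurent_fixed v : laurent v -> v \in LN -> exists t (C : 'cV[int]_n -> L),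
  [/\ uniq t, forall w, C w \in K, forall w, w \in t -> C w * xmon w \in LN
    & v = \sum_(w <- t) C w * xmon w].
Proof.
move=> lv /fixedP fv; have [t [C [t_uniq KC vE]]] := laurent_uniq lv.
exists t, C; split => // w tw; apply/fixedP => h Nh; have Gh := Gdiag_sub Nh.
have /choice [chi chiP] : forall u, exists c, (c \in K) /\ act h (xmon u) = c * xmon u.
  by move=> u; have [c /andP [Kc _] ?] := Gdiag_xmon u Nh; exists c.
have [f actE] := act_rmorph Gh.
have actCx u : act h (C u * xmon u) = act h (C u) * chi u * xmon u.
  by rewrite actE rmorphM -actE (proj2 (chiP u)) mulrA.
have : act h (C w) * chi w - C w = 0.
  apply: (xmon_free (r := t) (phi := id) (c := fun u => act h (C u) * chi u - C u)) => // [u _|].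
    by rewrite subfieldB ?subfieldM ?act_in ?(proj1 (chiP u)).
  under eq_bigr do rewrite mulrBl -actCx.
  have actv : act h v = \sum_(u <- t) act h (C u * xmon u) by rewrite {1}vE actE rmorph_sum.
  by rewrite sumrB -vE -actv fv ?subrr.
by rewrite actCx => /eqP; rewrite subr_eq0 => /eqP ->.
Qed.

(* Multiplying numerator and denominator by the other Gdiag-conjugates of the
   denominator makes the denominator invariant. *)
Lemma fixed_laurent_fraction b : b \in LN -> exists p q,
  [/\ laurent p, laurent q, p \in LN, q \in LN & q != 0 /\ b = p / q].
Proof.
move=> Nb; have [p [q [lp lq q0 bE]]] := laurent_fraction b.
pose r := \prod_(g in Gdiag | g != 1%g) act g q.
have qr : \prod_(g in Gdiag) act g q = q * r by rewrite (bigD1 1%g) ?group1 //= act1.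
have r0 : r != 0.
  rewrite prodf_seq_neq0; apply/allP => g _.
  by apply/implyP => /andP [/Gdiag_sub Gg _]; rewrite act_eq0.
have lr : laurent r by apply: laurent_prod => g /andP [/Gdiag_sub Gg _]; apply: laurent_act.
have qr_fixed : q * r \in LN by rewrite -qr prod_orbit_fixed.
have pr_fixed : p * r \in LN.
  have -> : p * r = b * (q * r) by rewrite bE; field; rewrite q0.
  exact: subfieldM fixed_subfield _ _ Nb qr_fixed.
exists (p * r), (q * r); split => //; try exact: laurentM.
by rewrite mulf_neq0 // bE; split=> //; field; rewrite q0 r0.
Qed.

Definition fixed_exponent w := exists2 p, (p \in K) && (p != 0) & p * xmon w \in LN.

Lemma fixed_exponentB u v : fixed_exponent u -> fixed_exponent v -> fixed_exponent (u - v).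
Proof.
move=> [p /andP [Kp p0] pu] [q /andP [Kq q0] qv]; exists (p / q).
  by rewrite subfield_div //= mulf_neq0 ?invr_eq0.
have -> : p / q * xmon (u - v) = (p * xmon u) / (q * xmon v).
  by rewrite xmonB //; field; rewrite q0 xmon_neq0.
exact: subfield_div fixed_subfield _ _ pu qv.
Qed.

Lemma fixed_exponentZ (z : int) u : fixed_exponent u -> fixed_exponent (z *: u).
Proof.
move=> [p /andP [Kp p0] pu]; exists (p ^ z); first by rewrite subfieldXz //= expfz_neq0.
by rewrite xmonZ // -expfzMl subfieldXz //; apply: fixed_subfield.
Qed.

(* The norm prod_(g in Gdiag) g(x_j) is an invariant multiple of x_j^|Gdiag|. *)
Lemma fixed_exponent_full j : fixed_exponent (#|Gdiag|%:Z *: delta_mx j 0).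
Proof.
have /choice [c cP] : forall g, exists c,
    g \in Gdiag -> ((c \in K) && (c != 0)) /\ act g (x j) = c * x j.
  move=> g; have [Ng|_] := boolP (g \in Gdiag); last by exists 0.
  by have [c ? xE] := Gdiag_xmon (delta_mx j 0) Ng; exists c; rewrite -xmon_delta.
exists (\prod_(g in Gdiag) c g).
  rewrite subfield_prod => [|//|g /cP [/andP [] //]].
  by rewrite prodf_seq_neq0; apply/allP => g _; apply/implyP => /cP [/andP []].
have -> : xmon (#|Gdiag|%:Z *: delta_mx j 0) = \prod_(g in Gdiag) x j.
  by rewrite xmonZ xmon_delta prodr_const.
by rewrite -big_split (eq_bigr (fun g => act g (x j))) ?prod_orbit_fixed // => g /cP [_ ->].
Qed.

Lemma fixed_exponent_coef w : fixed_exponent w ->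
  exists c, [/\ c \in K, c != 0, c * xmon w \in LN & (xmon w \in LN -> c = 1)].
Proof.
have [fixed_w _|] := boolP (xmon w \in LN).
  by exists 1; rewrite subfield1 ?oner_neq0 ?mul1r.
by move=> not_fixed [c /andP [Kc c0] fixed_cw]; exists c; split => // /(negP not_fixed).
Qed.

Lemma pqm_fixed_xmon : pqm_action k K predT G [set 1%g] act x -> forall w, xmon w \in LN.
Proof.
case=> _ pure w; apply/fixedP => g Ng; have Gg := Gdiag_sub Ng.
suff fix_x j : act g (x j) = x j.
  have [f actE] := act_rmorph Gg; rewrite /xmon actE rmorph_prod.
  by apply: eq_bigr => j _; rewrite fmorphXz -actE fix_x.
move: Ng; rewrite inE Gg => /diagonalP/(_ j) [c Kc xE].
have [A _ /(_ j)] := pure g Gg; rewrite xE -xmon_col -[xmon (col j A)]mul1r -xmon_delta.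
by case/esym/xmon_inj; rewrite ?subfield1 ?oner_neq0 // => _ <-; rewrite mul1r.
Qed.

Section Generators.
Variables (B : 'M[int]_n) (a : 'I_n -> L).
Hypotheses (detB : \det B != 0)
  (B_span : forall v, fixed_exponent v -> exists w, v = B *m w)
  (a_fix : forall i, [/\ a i \in K, a i != 0 & a i * xmon (col i B) \in LN]).

Local Notation KN := [pred b | (b \in K) && (b \in LN)].

Definition yvar i := a i * xmon (col i B).

Definition yscale (w : 'cV[int]_n) := \prod_(i < n) a i ^ w i 0.

Lemma yvar_fixed i : yvar i \in LN.
Proof. by case: (a_fix i). Qed.

Lemma yscale_in w : yscale w \in K.
Proof. by apply: subfield_prod => // i _; apply: subfieldXz => //; case: (a_fix i). Qed.

Lemma yscale_neq0 w : yscale w != 0.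
Proof. by rewrite prodf_seq_neq0; apply/allP => i _; rewrite expfz_neq0 //; case: (a_fix i). Qed.

Lemma yvar_prod (w : 'cV[int]_n) : \prod_(i < n) yvar i ^ w i 0 = yscale w * xmon (B *m w).
Proof. by rewrite xmon_mulmx -big_split /=; apply: eq_bigr => i _; rewrite expfzMl. Qed.

Lemma yvar_prod_fixed (w : 'cV[int]_n) : \prod_(i < n) yvar i ^ w i 0 \in LN.
Proof.
apply: (subfield_prod fixed_subfield) => i _.
by apply: (subfieldXz fixed_subfield); apply: yvar_fixed.
Qed.

Lemma xmon_yvar p (w : 'cV[int]_n) :
  p * xmon (B *m w) = p / yscale w * \prod_(i < n) yvar i ^ w i 0.
Proof. by rewrite yvar_prod; field; rewrite yscale_neq0. Qed.

Lemma fixed_xmon_coef p (w : 'cV[int]_n) :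
  p \in K -> p * xmon (B *m w) \in LN -> p / yscale w \in KN.
Proof.
move=> Kp fixed_pw; rewrite inE subfield_div ?yscale_in //=.
have -> : p / yscale w = p * xmon (B *m w) / \prod_(i < n) yvar i ^ w i 0.
  by rewrite yvar_prod; field; rewrite yscale_neq0 xmon_neq0.
by apply: subfield_div fixed_pw (yvar_prod_fixed w); apply: fixed_subfield.
Qed.

Section MinimalField.
Variable P : pred L.
Hypotheses (subP : is_subfield P) (KN_P : sub_pred KN P) (yvar_P : forall i, yvar i \in P).

Lemma fixed_xmon_in c w : c \in K -> c * xmon w \in LN -> c * xmon w \in P.
Proof.
move=> Kc fixed_cw; have [->|c0] := eqVneq c 0; first by rewrite mul0r subfield0.
have [v wE] := B_span (ex_intro2 _ _ c (introT andP (conj Kc c0)) fixed_cw).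
rewrite wE xmon_yvar subfieldM //; first by apply/KN_P/fixed_xmon_coef => //; rewrite -wE.
by apply: subfield_prod => // i _; apply: subfieldXz.
Qed.

Lemma fixed_in_gen b : b \in LN -> b \in P.
Proof.
have fixed_laurent_in v : laurent v -> v \in LN -> v \in P.
  move=> lv fixed_v; have [t [C [_ KC fixed_C ->]]] := laurent_fixed lv fixed_v.
  by rewrite big_seq; apply: subfield_sum => // w tw; apply: fixed_xmon_in; rewrite ?fixed_C.
move=> /fixed_laurent_fraction [p [q [lp lq fixed_p fixed_q [_ ->]]]].
by apply: (subfield_div subP); apply: fixed_laurent_in.
Qed.

End MinimalField.

Lemma gen_field_yvar : gen_field KN yvar LN.
Proof.
split; [exact: fixed_subfield | by move=> b /andP [] | exact: yvar_fixed |].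
by move=> P subP KN_P yvar_P b; apply: fixed_in_gen.
Qed.

Lemma alg_indep_yvar : alg_indep KN yvar.
Proof.
move=> s c s_uniq KNc sum0 e se.
pose col_of (f : {ffun 'I_n -> nat}) : 'cV[int]_n := \col_i (f i)%:Z.
have yvar_monE (f : {ffun 'I_n -> nat}) :
    \prod_(i < n) yvar i ^+ f i = yscale (col_of f) * xmon (B *m col_of f).
  by rewrite -yvar_prod; apply: eq_bigr => i _; rewrite mxE.
have: c e * yscale (col_of e) = 0.
  apply: (xmon_free (r := s) (phi := fun f => B *m col_of f)
    (c := fun f => c f * yscale (col_of f))) => // [f1 f2 _ _|f sf|].
  - move/(mulmx_detl_inj detB)/matrixP => col12; apply/ffunP => i.
    by have := col12 i 0; rewrite !mxE => -[].
  - by rewrite subfieldM ?yscale_in //; case/andP: (KNc f sf).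
  by under eq_bigr => f _ do rewrite -mulrA -yvar_monE.
by move/eqP; rewrite mulf_eq0 (negPf (yscale_neq0 _)) orbF => /eqP.
Qed.

Lemma act_yvar g (A : 'M[int]_n) j : g \in G -> rho_rel K x act g A ->
  exists2 p, (p \in K) && (p != 0) & act g (yvar j) = p * xmon (A *m col j B).
Proof.
move=> Gg rhoA; have [c /andP [Kc c0] cE] := act_xmon (col j B) Gg rhoA.
have [Ka a0 _] := a_fix j; have [f actE] := act_rmorph Gg.
exists (act g (a j) * c); first by rewrite subfieldM ?act_in ?mulf_neq0 ?act_eq0.
by rewrite /yvar actE rmorphM -actE cE mulrA.
Qed.

(* The rho-matrix A of g then satisfies A B = B, hence A = 1 as det B != 0. *)
Lemma yvar_diagonal g : g \in G ->
  (forall j, exists2 d, d \in K & act g (yvar j) = d * yvar j) -> g \in Gdiag.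
Proof.
move=> Gg yd; have [A _ rhoA] := act_rho Gg.
have col_AB j : A *m col j B = col j B.
  have [d Kd dE] := yd j; have [p /andP [Kp p0] pE] := act_yvar j Gg rhoA.
  have [Ka _ _] := a_fix j; move: dE; rewrite pE /yvar mulrA.
  by case/xmon_inj; rewrite ?subfieldM.
have AB : A *m B = B.
  apply/matrixP => i j; have := congr1 (fun v : 'cV_n => v i 0) (col_AB j).
  by rewrite mulmx_colsub !mxE.
rewrite inE Gg; apply/diagonalP => j; have [c /andP [Kc _] cE] := rhoA j.
by exists c; rewrite // cE -xmon_col (mulmx_fixl_eq1 detB AB) col1 xmon_delta.
Qed.

Lemma rho_intertwine g A : g \in G -> rho_rel K x act g A ->
  exists C : 'M[int]_n, B *m C = A *m B.
Proof.
move=> Gg rhoA.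
have /fin_all_exists [w wE] : forall j, exists w, A *m col j B = B *m w.
  move=> j; apply: B_span; have [p Kp pE] := act_yvar j Gg rhoA.
  by exists p; rewrite // -pE act_fixed ?yvar_fixed.
exists (\matrix_(i, j) w j i 0); apply/matrixP => i j.
have := congr1 (fun v : 'cV_n => v i 0) (wE j); rewrite mulmx_colsub !mxE => ->.
by apply: eq_bigr => l _; rewrite mxE.
Qed.

Lemma rho_yvar g : g \in G -> exists2 C : 'M[int]_n, C \in unitmx & rho_rel KN yvar act g C.
Proof.
move=> Gg; have [A A_unit rhoA] := act_rho Gg; have [C BC] := rho_intertwine Gg rhoA.
exists C; first by rewrite unitmxE (det_intertwined detB BC) -unitmxE.
move=> j; have [p /andP [Kp p0] pE] := act_yvar j Gg rhoA.
have ACj : A *m col j B = B *m col j C by rewrite !mulmx_colsub BC.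
exists (p / yscale (col j C)).
  apply/andP; split; last by rewrite mulf_neq0 ?invr_eq0 ?yscale_neq0.
  by apply: fixed_xmon_coef; rewrite // -ACj -pE act_fixed ?yvar_fixed.
rewrite pE ACj xmon_yvar; congr (_ * _); apply: eq_bigr => i _; by rewrite mxE.
Qed.

Lemma qm_action_yvar : qm_action k KN LN G Gdiag act yvar.
Proof.
split.
- by move=> g Gg b; apply: act_fixed.
- move=> g Gg fix_g; apply: yvar_diagonal => // j.
  by exists 1; rewrite ?subfield1 ?mul1r ?fix_g ?yvar_fixed.
- by move=> g Gg b /andP [Kb fixed_b]; rewrite inE act_in ?act_fixed.
- by move=> b /andP [Kb _]; case: qm_x => _ _ _ /(_ b Kb).
- exact: rho_yvar.
Qed.

Lemma rho_yvar_inj g h (A : 'M[int]_n) : g \in G -> h \in G ->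
  rho_rel KN yvar act g A -> rho_rel KN yvar act h A -> (g * h^-1)%g \in Gdiag.
Proof.
move=> Gg Gh rhog rhoh.
suff Nhg : (h^-1 * g)%g \in Gdiag.
  by have := Gdiag_conj (groupVr Gh) Nhg; rewrite /conjg invgK !mulgA mulgV mul1g.
apply: yvar_diagonal; first by rewrite groupM ?groupV.
move=> j; have [c /andP [/andP [Kc _] _] cE] := rhog j.
have [c' /andP [/andP [Kc' _] c'0] c'E] := rhoh j.
exists (act h^-1%g (c / c')); first by rewrite act_in ?groupV ?subfield_div.
rewrite actM ?groupV //; have -> : act g (yvar j) = c / c' * act h (yvar j).
  by rewrite cE c'E; field.
by have [f actE] := act_rmorph (groupVr Gh); rewrite actE rmorphM -actE actK.
Qed.

End Generators.

End DiagonalSubgroup.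

End LaurentMonomials.

Theorem proposition1p12 (L : fieldType) (k K : pred L) (n : nat)
    (x : 'I_n -> L) (gT : finGroupType) (G : {group gT})
    (act : gT -> L -> L) :
  is_subfield k -> is_subfield K -> finite_ext k K ->
  alg_indep K x -> gen_field K x predT ->
  kaut_action k G act ->
  qm_action k K predT G [set 1%g] act x ->
  exists N : {group gT}, (N <| G)%g /\
    let LN := fixed_field N act in
    let KN := [pred a | (a \in K) && (a \in LN)] in
    exists (y : 'I_n -> L) (a : 'I_n -> L) (e : 'I_n -> 'I_n -> int),
      [/\ gen_field KN y LN /\ alg_indep KN y,
          forall i, [/\ a i \in K, a i != 0 & y i = a i * \prod_(j < n) x j ^ e i j],
          (pqm_action k K predT G [set 1%g] act x -> forall i, a i = 1),
          qm_action k KN LN G N act y &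
          forall g h (A : 'M[int]_n), g \in G -> h \in G ->
            rho_rel KN y act g A -> rho_rel KN y act h A -> (g * h^-1)%g \in N].
Proof.
move=> _ subK _ indep_x gen_x kaut qm_x.
pose N := Gdiag_group subK indep_x kaut qm_x.
exists N; split; first exact: (Gdiag_normal subK indep_x kaut qm_x).
have [B [detB fixed_B B_span]] := lattice_basis (fixed_exponentB subK indep_x kaut)
  (fixed_exponentZ subK kaut) (cardG_gt0 N) (fixed_exponent_full subK indep_x kaut qm_x).
have /fin_all_exists [a a_coef] := fun i => fixed_exponent_coef subK (fixed_B i).
have a_fixed i : [/\ a i \in K, a i != 0 & a i * xmon x (col i B) \in fixed_field N act].
  by case: (a_coef i).
exists (yvar x B a), a, (fun i j => B j i); split.
- split; first exact: (gen_field_yvar subK indep_x gen_x kaut qm_x B_span a_fixed).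
  exact: (alg_indep_yvar subK indep_x detB a_fixed).
- by move=> i; case: (a_coef i) => Ka a0 _ _; rewrite /yvar xmon_col.
- by move=> pqm i; case: (a_coef i) => _ _ _ -> //; apply: (pqm_fixed_xmon subK indep_x kaut).
- exact: (qm_action_yvar subK indep_x kaut qm_x detB B_span a_fixed).
- exact: (rho_yvar_inj subK indep_x kaut qm_x detB a_fixed).
Qed.
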